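(* Assume (A3) and (A4). Let $x:[t_0,\infty)\to\mathcal H$ be any function with $x(t_0)=x_0$ and $x(t)\in\mathcal L(F,F(x_0)+a)$ for all $t\ge t_0$, where $a$ is the vector from (A3). For $t\ge t_0$ let $z(t):=\operatorname{argmin}_{z\in\mathcal H}\max_i(f_i(z)-f_i(x(t)))+\frac{\beta}{2t^p}\|z\|^2$. Then $\|z(t)\|\le R$ for all $t\ge t_0$, with $R$ the constant from (A3).
   Context: $\mathcal H$ is a real Hilbert space; $f_1,\dots,f_m:\mathcal H\to\mathbb R$ are convex, continuously differentiable with Lipschitz continuous gradients; $F=(f_1,\dots,f_m)^\top$. Weak Pareto optimal: no $x$ with $f_i(x)<f_i(x^* )$ for all $i$; $\mathcal P_w$ is the set of such points. $\mathcal L(F,b):=\{x: f_i(x)\le b_i\ \forall i\}$, $\mathcal{LP}_w(F,b):=\mathcal L(F,b)\cap\mathcal P_w$. Fixed data: $t_0>0$, $\beta>0$, $p\in(0,2]$, $x_0,v_0\in\mathcal H$. (A3): with $a\in\mathbb R^m$, $a_i:=\frac{\beta}{2t_0^p}\|x_0\|^2+\frac12\|v_0\|^2$, for every $x\in\mathcal L(F,F(x_0)+a)$ one has $\mathcal{LP}_w(F,F(x))\ne\emptyset$, and $R:=\sup_{F^*\in F(\mathcal{LP}_w(F,F(x_0)+a))}\inf_{z\in F^{-1}(\{F^*\})}\|z\|<\infty$. (A4): for every $w\in\mathbb R^m$ the set $S(w):=\operatorname{argmin}_z\max_i(f_i(z)-w_i)$ is nonempty and $w\mapsto\operatorname{proj}_{S(w)}(0)$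 is continuous. *)

From HB Require Import structures.
From mathcomp Require Import all_boot all_order all_algebra.
From mathcomp Require Import all_classical all_reals all_analysis.
Set Implicit Arguments. Unset Strict Implicit. Unset Printing Implicit Defensive.
Import Order.TTheory GRing.Theory Num.Theory.
Import numFieldNormedType.Exports.
Local Open Scope classical_set_scope.
Local Open Scope ring_scope.

Section Defs.
Variable R : realType.

Definition is_inner_product (V : normedModType R) (inner : V -> V -> R) : Prop :=
  (forall x y, inner x y = inner y x) /\
  (forall a x y z, inner (a *: x + y) z = a * inner x z + inner y z) /\
  (forall x, inner x x = `|x| ^+ 2).

Definition convex_fun (V : normedModType R) (f : V -> R) : Prop :=
  forall (x y : V) (l : R), 0 <= l <= 1 ->
    f (l *: x + (1 - l) *: y) <= l * f x + (1 - l) * f y.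

Definition C11_grad (V : normedModType R) (inner : V -> V -> R) (f : V -> R) : Prop :=
  exists g : V -> V,
    (forall x, differentiable f x /\ (forall h, 'd f x h = inner (g x) h)) /\
    (exists L : R, forall x y, `|g x - g y| <= L * `|x - y|).

Definition maxI (m : nat) (hm : (0 < m)%N) (g : 'I_m -> R) : R :=
  \big[Num.max/g (Ordinal hm)]_(i < m) g i.

Variable V : normedModType R.
Variables (m : nat) (f : 'I_m -> V -> R).

Definition Fv (x : V) : 'I_m -> R := fun i => f i x.

Definition weak_pareto (xs : V) : Prop :=
  ~ (exists x : V, forall i, f i x < f i xs).

Definition levelset (b : 'I_m -> R) : set V := [set x | forall i, f i x <= b i].

Definition LPw (b : 'I_m -> R) : set V := levelset b `&` [set x | weak_pareto x].

Definition Rconst (b : 'I_m -> R) : \bar R :=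
  ereal_sup [set (ereal_inf [set (`|z|)%:E | z in [set z | Fv z = Fs]])%E
            | Fs in Fv @` LPw b].

Definition is_proj (S : set V) (y p : V) : Prop :=
  S p /\ forall s, S s -> `|y - p| <= `|y - s|.

Definition Sw (hm : (0 < m)%N) (w : 'I_m -> R) : set V :=
  [set z | forall z', maxI hm (fun i => f i z - w i) <= maxI hm (fun i => f i z' - w i)].

End Defs.

From HB Require Import structures.
From mathcomp Require Import all_boot all_order all_algebra.
From mathcomp Require Import all_classical all_reals all_analysis.
From mathcomp Require Import lra.
Set Implicit Arguments. Unset Strict Implicit. Unset Printing Implicit Defensive.
Import Order.TTheory GRing.Theory Num.Theory.
Import numFieldNormedType.Exports.
Local Open Scope classical_set_scope.
Local Open Scope ring_scope.

(* Since [z(t)] minimises [phi + c |.|^2] with [phi z' := max_i (f_i z' - f_i (x t))],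
   every [z'] with [phi z' <= phi z(t)] has norm at least [|z(t)|].  Such points
   include every [z'] with [F z' <= F y], where [y] is [z(t)] itself if [phi z(t) <= 0]
   and [x t] otherwise; in both cases [y] lies in the level set [L(F, b0)].  By (A3)
   there is a weakly Pareto optimal [xs] with [F xs <= F y], so the whole fibre
   [F^-1(F xs)] has norm at least [|z(t)|], and this fibre enters the supremum
   defining [R].  Only the nonemptiness part of (A3) is needed. *)

Section MaxI.
Variables (R : realType) (m : nat) (hm : (0 < m)%N).

Lemma maxI_ge (g : 'I_m -> R) i : g i <= maxI hm g.
Proof. exact: le_bigmax. Qed.

Lemma maxI_le (g : 'I_m -> R) c : (forall i, g i <= c) -> maxI hm g <= c.
Proof. by move=> gc; apply: bigmax_le. Qed.

Lemma maxI_le_maxI (g h : 'I_m -> R) :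
  (forall i, g i <= h i) -> maxI hm g <= maxI hm h.
Proof. by move=> gh; apply: maxI_le => i; apply: le_trans (gh i) (maxI_ge h i). Qed.

End MaxI.

Section LevelSets.
Variables (R : realType) (V : normedModType R) (m : nat) (f : 'I_m -> V -> R).

Lemma levelset_le (b b' : 'I_m -> R) :
  (forall i, b i <= b' i) -> levelset f b `<=` levelset f b'.
Proof. by move=> bb' y Ly i; apply: le_trans (Ly i) (bb' i). Qed.

Lemma LPw_le (b b' : 'I_m -> R) :
  (forall i, b i <= b' i) -> LPw f b `<=` LPw f b'.
Proof. by move=> bb' y [Ly Py]; split => //; apply: levelset_le Ly. Qed.

Lemma fibre_norm_le_Rconst (b : 'I_m -> R) (xs z : V) :
  LPw f b xs -> (forall z', Fv f z' = Fv f xs -> `|z| <= `|z'|) ->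
  ((`|z|)%:E <= Rconst f b)%E.
Proof.
move=> LPxs zfib; rewrite /Rconst.
apply: le_trans (ereal_sup_ubound _); last by exists (Fv f xs) => //; exists xs.
by apply: le_ereal_inf_tmp => _ [z' /= /zfib ? <-]; rewrite lee_fin.
Qed.

End LevelSets.

Lemma norm_le_of_regularized_argmin (R : realType) (V : normedModType R)
    (phi : V -> R) (c : R) (z : V) :
  0 < c -> (forall z', phi z + c * `|z| ^+ 2 <= phi z' + c * `|z'| ^+ 2) ->
  forall z', phi z' <= phi z -> `|z| <= `|z'|.
Proof.
move=> c_gt0 zmin z' phiz'; have := zmin z' => zz'.
have : c * `|z| ^+ 2 <= c * `|z'| ^+ 2 by lra.
by rewrite ler_pM2l // => ?; rewrite -(@ler_pXn2r _ 2) ?nnegrE.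
Qed.

Lemma exists_levelset_dominator (R : realType) (V : normedModType R)
    (m : nat) (hm : (0 < m)%N) (f : 'I_m -> V -> R) (b : 'I_m -> R) (w z : V) :
  levelset f b w ->
  let phi := fun z' => maxI hm (fun i => f i z' - f i w) in
  exists2 y, levelset f b y &
    forall z', (forall i, f i z' <= f i y) -> phi z' <= phi z.
Proof.
move=> Lw phi; have [phiz_le0|phiz_gt0] := lerP (phi z) 0.
- exists z => [i|z' z'z]; last by apply: maxI_le_maxI => i; have := z'z i; lra.
  apply: le_trans (Lw i).
  by have := le_trans (maxI_ge hm (fun i => f i z - f i w) i) phiz_le0; lra.
- exists w => // z' z'w; apply: le_trans (ltW phiz_gt0).
  by apply: maxI_le => i; have := z'w i; lra.
Qed.

Theorem mainTheorem6 (R : realType) (V : completeNormedModType R)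
  (inner : V -> V -> R) (m : nat) (hm : (0 < m)%N) (f : 'I_m -> V -> R)
  (t0 beta p : R) (x0 v0 : V) :
  is_inner_product inner ->
  (forall i, convex_fun (f i)) ->
  (forall i, C11_grad inner (f i)) ->
  0 < t0 -> 0 < beta -> 0 < p <= 2 ->
  let a : 'I_m -> R :=
    fun _ => beta / (2 * t0 `^ p) * `|x0| ^+ 2 + 2^-1 * `|v0| ^+ 2 in
  let b0 : 'I_m -> R := fun i => f i x0 + a i in
  (* (A3) *)
  (forall x, levelset f b0 x -> LPw f (Fv f x) !=set0) ->
  (Rconst f b0 < +oo)%E ->
  (* (A4) *)
  (forall w : 'I_m -> R, Sw f hm w !=set0) ->
  (exists P : 'rV[R]_m -> V,
      (forall w : 'rV[R]_m, is_proj (Sw f hm (fun i => w ord0 i)) 0 (P w)) /\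
      continuous P) ->
  forall x : R -> V,
  x t0 = x0 ->
  (forall t, t0 <= t -> levelset f b0 (x t)) ->
  forall t, t0 <= t ->
  forall z : V,
    (forall z' : V,
       maxI hm (fun i => f i z - f i (x t)) + beta / (2 * t `^ p) * `|z| ^+ 2
       <= maxI hm (fun i => f i z' - f i (x t)) + beta / (2 * t `^ p) * `|z'| ^+ 2) ->
    ((`|z|)%:E <= Rconst f b0)%E.
Proof.
move=> _ _ _ t0_gt0 beta_gt0 _ a b0 A3 _ _ _ x _ Lx t t0t z zmin.
have c_gt0 : 0 < beta / (2 * t `^ p) by rewrite divr_gt0 // mulr_gt0 // powR_gt0 //; lra.
have zbound := norm_le_of_regularized_argmin c_gt0 zmin.
have [y Ly ydom] := exists_levelset_dominator hm z (Lx t t0t).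
have [xs LPxs] := A3 y Ly.
apply: (fibre_norm_le_Rconst (xs := xs)); first exact: (LPw_le (b := Fv f y) Ly) xs LPxs.
move=> z' Fz'; apply/zbound/ydom => i.
by rewrite -[f i z']/(Fv f z' i) Fz'; apply: LPxs.1.
Qed.
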